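(* Let $1<p<N$, $q>0$, $\mu>0$, and $g(s)=\frac{(p-1)^{q-p+1}}{\mu^q}(1+\mu s)^{p-1}|\ln(1+\mu s)|^{q-1}\ln(1+\mu s)$ for $s>-1/\mu$. Then for every $r\in(p-1,p)$: (1) if $q\ge p-1$, there exist constants $c_0,c_1>0$ such that $|g(s)|\le c_0|s|^r+c_1|s|^{p-1}$ for all $s>-1/\mu$; (2) if $0<q<p-1$, there exist constants $c_1,c_2>0$ such that $|g(s)|\le c_1|s|^r+c_2|s|^{q}$ for all $s>-1/\mu$. *)

From HB Require Import structures.
From mathcomp Require Import all_boot all_order all_algebra.
From mathcomp Require Import all_classical all_reals all_analysis.
Set Implicit Arguments. Unset Strict Implicit. Unset Printing Implicit Defensive.
Import Order.TTheory GRing.Theory Num.Theory.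
Local Open Scope ring_scope.

(* Convention: |t|^{q-1} t is read with powR, which
   gives 0 at t = 0 (the continuous extension). *)
Definition gfun (R : realType) (p q mu : R) (s : R) : R :=
  ((p - 1) `^ (q - p + 1) / mu `^ q) * (1 + mu * s) `^ (p - 1)
  * `|ln (1 + mu * s)| `^ (q - 1) * ln (1 + mu * s).

(* With x = mu s, |g(s)| is a positive constant times
   h(x) = (1 + x)^(p-1) |ln (1 + x)|^q.  On (-1, 1], h(x) = O(|x|^q): on the
   left because t^e |ln t| <= (1 - t)/e for t in (0, 1) and e <= 1, on the right
   because ln (1 + x) <= x.  For x >= 1, h(x) = O(x^r) because ln t <= t^e / e
   for every e > 0.  Since |x|^q <= |x|^a when |x| <= 1 and a <= q, both claims
   are the instances a = p - 1 and a = q of h(x) <= A |x|^r + B |x|^a. *)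

From HB Require Import structures.
From mathcomp Require Import all_boot all_order all_algebra.
From mathcomp Require Import all_classical all_reals all_analysis.
From mathcomp Require Import ring lra.
Import Order.TTheory GRing.Theory Num.Theory.
Local Open Scope ring_scope.
Set Implicit Arguments. Unset Strict Implicit.

Section PowR.
Variable R : realType.
Implicit Types a e x y : R.

Lemma mul_ln_le_powR_subr1 y e : 0 < y -> e * ln y <= y `^ e - 1.
Proof.
move=> y0; rewrite -ln_powR.
have := @le_ln1Dx R (y `^ e - 1); rewrite subrKC; apply.
by rewrite ltrBrDl subrr powR_gt0.
Qed.

Lemma ge0_ger_powR a x y : 0 <= a <= 1 -> 0 < x <= y -> a `^ y <= a `^ x.
Proof.
move=> /andP[a0 a1] /andP[x0 xy].
have [->|an0] := eqVneq a 0.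
  by rewrite powR0 ?powR_ge0 // gt_eqF // (lt_le_trans x0 xy).
by apply: ger_powR => //; rewrite a1 andbT lt_neqAle eq_sym an0.
Qed.

End PowR.

Definition gprofile (R : realType) (p q x : R) : R :=
  (1 + x) `^ (p - 1) * `|ln (1 + x)| `^ q.

Section Profile.
Variables (R : realType) (p q : R).
Hypotheses (hp : 1 < p) (hq : 0 < q).
Implicit Types e r x : R.

(* From [-e ln t <= t^-e - 1] for [t = 1 + x] in (0, 1), and [t <= t^e] since [e <= 1]. *)
Lemma powR_mul_ln_le_neg x e : -1 < x -> x < 0 -> 0 < e -> e <= 1 ->
  (1 + x) `^ e * `|ln (1 + x)| <= `|x| / e.
Proof.
move=> x_gtN1 x_lt0 e0 e1.
set t := 1 + x; have t0 : 0 < t by rewrite /t; lra.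
rewrite (ltr0_norm x_lt0) (ltr0_norm (ln_lt0 _)); last by rewrite t0 /t; lra.
have := mul_ln_le_powR_subr1 (- e) t0; rewrite powRN.
set P := t `^ e => lnP.
have P0 : 0 < P by apply: powR_gt0.
have tP : t <= P by apply: ger1_powR; rewrite ?t0 /t //; lra.
have PV : P * P^-1 = 1 by rewrite mulfV ?gt_eqF.
rewrite ler_pdivlMr //.
have : 0 <= P * (P^-1 - 1 + e * ln t) by apply: mulr_ge0; lra.
rewrite /t in tP *; nra.
Qed.

Lemma gprofile_le_neg x e : -1 < x -> x < 0 -> 0 < e -> e <= 1 ->
  e * q <= p - 1 -> gprofile p q x <= (`|x| / e) `^ q.
Proof.
move=> x_gtN1 x_lt0 e0 e1 eq_le.
have t0 : 0 < 1 + x by lra.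
have lnx0 : 0 <= `|ln (1 + x)| by [].
apply: (@le_trans _ _ (((1 + x) `^ e) `^ q * `|ln (1 + x)| `^ q)).
  rewrite ler_wpM2r ?powR_ge0 // -powRrM.
  by apply: ger_powR => //; rewrite t0 /=; lra.
rewrite -powRM ?powR_ge0 //.
apply: ge0_ler_powR; rewrite ?nnegrE ?(ltW hq) ?mulr_ge0 ?powR_ge0 //.
  by rewrite invr_ge0 ltW.
exact: powR_mul_ln_le_neg x_gtN1 x_lt0 e0 e1.
Qed.

Lemma gprofile_le_pos_small x : 0 <= x -> x <= 1 ->
  gprofile p q x <= 2 `^ (p - 1) * x `^ q.
Proof.
move=> x0 x1.
have lnx0 : 0 <= ln (1 + x) by apply: ln_ge0; lra.
have lnx : ln (1 + x) <= x by apply: le_ln1Dx; lra.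
have p1 : 0 <= p - 1 by rewrite subr_ge0 ltW.
apply: ler_pM; rewrite ?powR_ge0 // ?ger0_norm //.
  by apply: ge0_ler_powR => //; rewrite ?nnegrE; lra.
by apply: ge0_ler_powR; rewrite ?nnegrE ?(ltW hq).
Qed.

(* With [e = (r - p + 1) / q], [ln t <= t^e / e] turns [|ln t|^q] into [t^(r - p + 1)]. *)
Lemma gprofile_le_pos x r : 0 <= x -> p - 1 < r ->
  gprofile p q x <= (q / (r - p + 1)) `^ q * (1 + x) `^ r.
Proof.
move=> x0 pr.
set t := 1 + x; have t1 : 1 <= t by rewrite /t; lra.
have t0 : 0 < t by lra.
set e := (r - p + 1) / q.
have e0 : 0 < e by rewrite divr_gt0 //; lra.
have lnt0 : 0 <= ln t by apply: ln_ge0.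
have lnt : ln t <= t `^ e / e.
  by rewrite ler_pdivlMr // mulrC; have := mul_ln_le_powR_subr1 e t0; lra.
have tE : t `^ r = t `^ (p - 1) * (t `^ e) `^ q.
  rewrite -powRrM -powRD ?(gt_eqF t0) ?implybT // /e mulfVK ?gt_eqF //.
  by congr (_ `^ _); ring.
have qe : q / (r - p + 1) = e^-1 by rewrite /e invf_div.
rewrite /gprofile -/t tE mulrCA ler_wpM2l ?powR_ge0 // qe.
rewrite -powRM ?powR_ge0 ?invr_ge0 ?(ltW e0) // ger0_norm //.
apply: ge0_ler_powR; rewrite ?nnegrE ?(ltW hq) //.
  by rewrite mulr_ge0 ?powR_ge0 ?invr_ge0 ?(ltW e0).
by rewrite mulrC.
Qed.

Lemma gprofile_le_near0 :
  exists2 B, 0 < B & forall x, -1 < x -> x <= 1 -> gprofile p q x <= B * `|x| `^ q.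
Proof.
set e := Num.min 1 ((p - 1) / q).
have e0 : 0 < e by rewrite lt_min ltr01 divr_gt0 // subr_gt0.
have e1 : e <= 1 by rewrite ge_min lexx.
have eq_le : e * q <= p - 1 by rewrite -ler_pdivlMr // ge_min lexx orbT.
exists (e^-1 `^ q + 2 `^ (p - 1)); first by rewrite addr_gt0 ?powR_gt0 ?invr_gt0.
move=> x x_gtN1 x1; rewrite mulrDl.
have [x_lt0|x0] := ltP x 0.
- apply: le_trans (gprofile_le_neg x_gtN1 x_lt0 e0 e1 eq_le) _.
  rewrite powRM ?invr_ge0 ?(ltW e0) // mulrC lerDl.
  by rewrite mulr_ge0 ?powR_ge0.
- apply: le_trans (gprofile_le_pos_small x0 x1) _.
  by rewrite ger0_norm // lerDr mulr_ge0 ?powR_ge0.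
Qed.

Lemma gprofile_le_far r : p - 1 < r ->
  exists2 A, 0 < A & forall x, 1 <= x -> gprofile p q x <= A * x `^ r.
Proof.
move=> pr; exists ((q / (r - p + 1)) `^ q * 2 `^ r).
  by rewrite mulr_gt0 ?powR_gt0 // divr_gt0 //; lra.
move=> x x1; apply: le_trans (gprofile_le_pos _ pr) _; first lra.
have r0 : 0 <= r by apply: ltW; apply: le_lt_trans pr; rewrite subr_ge0 ltW.
rewrite -mulrA ler_wpM2l ?powR_ge0 // -powRM //; last lra.
by apply: ge0_ler_powR => //; rewrite ?nnegrE; lra.
Qed.

Lemma gprofile_le_two_powers r a : p - 1 < r -> 0 < a -> a <= q ->
  exists A B, [/\ 0 < A, 0 < B & forall x, -1 < x ->
    gprofile p q x <= A * `|x| `^ r + B * `|x| `^ a].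
Proof.
move=> pr a0 aq.
have [B B0 near0] := gprofile_le_near0.
have [A A0 far] := gprofile_le_far pr.
exists A, B; split => // x x_gtN1.
have [x1|x1] := leP x 1.
- apply: le_trans (near0 _ x_gtN1 x1) _.
  rewrite -[X in X <= _]add0r lerD ?mulr_ge0 ?powR_ge0 ?(ltW A0) //.
  rewrite ler_wpM2l ?(ltW B0) //; apply: ge0_ger_powR; rewrite ?a0 ?aq //.
  by rewrite normr_ge0 /= ler_norml; lra.
- apply: le_trans (far _ (ltW x1)) _.
  rewrite gtr0_norm; last lra.
  by rewrite lerDl mulr_ge0 ?powR_ge0 ?(ltW B0).
Qed.

End Profile.

Lemma normr_gfun (R : realType) (p q mu s : R) : 0 < q ->
  `|gfun p q mu s| = (p - 1) `^ (q - p + 1) / mu `^ q * gprofile p q (mu * s).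
Proof.
move=> q0; rewrite /gfun /gprofile.
set K := _ / _; have K0 : 0 <= K by rewrite divr_ge0 ?powR_ge0.
clearbody K.
rewrite !normrM (ger0_norm K0) !(ger0_norm (powR_ge0 _ _)).
by rewrite -(mulr_powRB1 (normr_ge0 _) q0); ring.
Qed.

Lemma gfun_le_two_powers (R : realType) (p q mu r a : R) :
  1 < p -> 0 < q -> 0 < mu -> p - 1 < r -> 0 < a -> a <= q ->
  exists c c' : R, 0 < c /\ 0 < c' /\ forall s, - mu^-1 < s ->
    `|gfun p q mu s| <= c * `|s| `^ r + c' * `|s| `^ a.
Proof.
move=> p1 q0 mu0 pr a0 aq.
have [A [B [A0 B0 profile_le]]] := gprofile_le_two_powers p1 q0 pr a0 aq.
set K := (p - 1) `^ (q - p + 1) / mu `^ q.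
have K0 : 0 < K by rewrite divr_gt0 ?powR_gt0 // subr_gt0.
exists (K * A * mu `^ r), (K * B * mu `^ a).
split; first exact: mulr_gt0 (mulr_gt0 K0 A0) (powR_gt0 _ mu0).
split; first exact: mulr_gt0 (mulr_gt0 K0 B0) (powR_gt0 _ mu0).
move=> s hs; rewrite normr_gfun // -/K.
have mus : -1 < mu * s by move: hs; rewrite -(ltr_pM2l mu0) mulrN mulfV ?gt_eqF.
have := profile_le _ mus; rewrite normrM (gtr0_norm mu0) !powRM ?(ltW mu0) //.
move/(ler_wpM2l (ltW K0)); rewrite mulrDr !mulrA.
by rewrite -[K * A * _ * _]mulrA -[K * B * _ * _]mulrA.
Qed.

Theorem lemma2p2 (R : realType) (N : nat) (p q mu : R)
  (hp1 : 1 < p) (hpN : p < N%:R) (hq : 0 < q) (hmu : 0 < mu) :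
  forall r : R, p - 1 < r -> r < p ->
  (p - 1 <= q ->
     exists c0 c1 : R, 0 < c0 /\ 0 < c1 /\
       forall s : R, - mu^-1 < s ->
         `|gfun p q mu s| <= c0 * `|s| `^ r + c1 * `|s| `^ (p - 1)) /\
  (q < p - 1 ->
     exists c1 c2 : R, 0 < c1 /\ 0 < c2 /\
       forall s : R, - mu^-1 < s ->
         `|gfun p q mu s| <= c1 * `|s| `^ r + c2 * `|s| `^ q).
Proof.
move=> r pr _; split=> [pq|_]; apply: gfun_le_two_powers => //.
by rewrite subr_gt0.
Qed.
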